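(* Let $L/K$ be a vast extension of fields of characteristic $0$, and let $K'/K$ be a finite extension which is disjoint from $L/K$. Then the extension $LK'/K'$ is vast.
   Context: All fields lie in a fixed algebraic closure and have characteristic zero. Two algebraic extensions of $K$ are disjoint over $K$ if they are linearly disjoint over $K$. An algebraic extension $L/K$ is called vast if $L \neq K$ and for every finite extension $E/K$ there exists a subfield $M$ of $L$ with $M \supsetneq K$ such that $M$ and $E$ are disjoint over $K$. *)

From HB Require Import structures.
From mathcomp Require Import all_boot all_order all_algebra.
Set Implicit Arguments. Unset Strict Implicit. Unset Printing Implicit Defensive.
Import GRing.Theory.
Local Open Scope ring_scope.

(* All fields are subfields (given as predicates) of a fixed algebraically
   closed field C of characteristic 0. *)
Section Defs.
Variable C : closedFieldType.

Definition is_subfield (F : C -> Prop) : Prop :=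
  [/\ F 0, F 1,
      (forall x y, F x -> F y -> F (x - y)),
      (forall x y, F x -> F y -> F (x * y)) &
      (forall x, F x -> F x^-1)].

Definition subf (A B : C -> Prop) : Prop := forall x, A x -> B x.

Definition algebraic_over (K : C -> Prop) (x : C) : Prop :=
  exists p : {poly C}, [/\ p != 0, (forall i, K p`_i) & root p x].

Definition algebraic_ext (K L : C -> Prop) : Prop :=
  [/\ is_subfield K, is_subfield L, subf K L &
      forall x, L x -> algebraic_over K x].

Definition finite_ext (K E : C -> Prop) : Prop :=
  [/\ is_subfield K, is_subfield E, subf K E &
      exists s : seq C, (forall i, (i < size s)%N -> E s`_i) /\
        forall x, E x -> exists c : nat -> C,
          (forall i, K (c i)) /\ x = \sum_(i < size s) c i * s`_i].

Definition lin_indep (K : C -> Prop) (s : seq C) : Prop :=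
  forall c : nat -> C, (forall i, K (c i)) ->
    \sum_(i < size s) c i * s`_i = 0 -> forall i, (i < size s)%N -> c i = 0.

Definition lin_disjoint (K E L : C -> Prop) : Prop :=
  forall s : seq C, (forall i, (i < size s)%N -> E s`_i) ->
    lin_indep K s -> lin_indep L s.

Definition compositum (L E : C -> Prop) : C -> Prop :=
  fun x => forall F, is_subfield F -> subf L F -> subf E F -> F x.

Definition vast (K L : C -> Prop) : Prop :=
  [/\ algebraic_ext K L,
      (exists x, L x /\ ~ K x) &
      forall E, finite_ext K E ->
        exists M : C -> Prop,
          [/\ is_subfield M, subf K M, subf M L, (exists x, M x /\ ~ K x) &
              lin_disjoint K M E]].
End Defs.

(* A finite extension E/K' is finite over K, so vastness of L/K yields M <= L,
   M <> K, disjoint from E over K.  Take x in M \ K with minimal polynomial of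
   degree d over K: the powers 1, x, ..., x^(d-1) lie in M and are independent
   over K, hence over E.  The field K'(x) <= LK' is spanned over K' by these
   powers, and K'-independent elements of it stay independent over E because
   their K'-coordinate matrix has full row rank; so K'(x) is disjoint from E
   over K'.  Finally x is not in K', since disjointness of K' and L forces
   the intersection of K' and L to be K. *)

From HB Require Import structures.
From mathcomp Require Import all_boot all_order all_algebra.
From mathcomp Require Import boolp.
Set Implicit Arguments. Unset Strict Implicit. Unset Printing Implicit Defensive.
Import GRing.Theory.
Local Open Scope ring_scope.

Section Subfields.
Variable C : closedFieldType.

(* Membership is unconditional when [K] is not a subfield, so that the
   predicate is always closed under the field operations. *)
Definition subfield_pred (K : C -> Prop) : {pred C} :=
  fun x => `[< is_subfield K -> K x >].

Lemma subfield_predP (K : C -> Prop) x :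
  is_subfield K -> x \in subfield_pred K <-> K x.
Proof.
by move=> HK; rewrite unfold_in; split=> [/asboolP|Kx]; [apply | apply/asboolP].
Qed.

Lemma subfield_pred_divring_closed K : GRing.divring_closed (subfield_pred K).
Proof.
have [[_ K1 KB KM KV] | notK] := EM (is_subfield K); last first.
  have memK x : x \in subfield_pred K by rewrite unfold_in; apply/asboolP.
  by split=> [|x y _ _|x y _ _]; apply: memK.
split=> [|x y|x y]; rewrite !unfold_in; first by apply/asboolP.
  move=> /asboolP Kx /asboolP Ky; apply/asboolP => HK.
  by apply: KB; [apply: Kx | apply: Ky].
move=> /asboolP Kx /asboolP Ky; apply/asboolP => HK.
by apply: KM; [apply: Kx | apply: KV; apply: Ky].
Qed.

HB.instance Definition _ K :=
  GRing.isDivringClosed.Build C (subfield_pred K) (subfield_pred_divring_closed K).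

Record subfield_of (K : C -> Prop) := SubfieldOf {
  subfield_val : C;
  _ : subfield_val \in subfield_pred K }.

HB.instance Definition _ K := [isSub for (@subfield_val K)].
HB.instance Definition _ K := [Choice of subfield_of K by <:].
HB.instance Definition _ K := [SubChoice_isSubComUnitRing of subfield_of K by <:].
HB.instance Definition _ K :=
  [SubComUnitRing_isSubIntegralDomain of subfield_of K by <:].
HB.instance Definition _ K := [SubIntegralDomain_isSubField of subfield_of K by <:].

Section SubfieldTheory.
Variables (K : C -> Prop) (HK : is_subfield K).
Local Notation memK := (subfield_predP _ HK).

Lemma subfield0 : K 0. Proof. exact/memK/rpred0. Qed.
Lemma subfield1 : K 1. Proof. exact/memK/rpred1. Qed.

Lemma subfieldN x : K x -> K (- x).
Proof. by move/memK=> Kx; apply/memK; rewrite rpredN. Qed.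

Lemma subfieldB x y : K x -> K y -> K (x - y).
Proof. by move=> /memK Kx /memK Ky; apply/memK; rewrite rpredB. Qed.

Lemma subfieldM x y : K x -> K y -> K (x * y).
Proof. by move=> /memK Kx /memK Ky; apply/memK; rewrite rpredM. Qed.

Lemma subfieldX x n : K x -> K (x ^+ n).
Proof. by move/memK=> Kx; apply/memK/rpredX. Qed.

Lemma subfieldV x : K x -> K x^-1.
Proof. by move/memK=> Kx; apply/memK; rewrite rpredV. Qed.

Lemma subfield_sum (I : Type) (r : seq I) (P : pred I) (f : I -> C) :
  (forall i, P i -> K (f i)) -> K (\sum_(i <- r | P i) f i).
Proof. by move=> Kf; apply/memK/rpred_sum => i /Kf/memK. Qed.

Lemma subfield_horner (p : {poly C}) x : (forall i, K p`_i) -> K x -> K p.[x].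
Proof.
move=> Kp /memK Kx; apply/memK/rpred_horner => //.
by apply/polyOverP => i; apply/memK.
Qed.

Lemma subfield_valK (a : subfield_of K) : K (val a).
Proof. by apply/memK; case: a. Qed.

Lemma subfield_val_onto x : K x -> exists a : subfield_of K, val a = x.
Proof. by move/memK=> Kx; exists (SubfieldOf Kx). Qed.

Lemma poly_subfield_lift (q : {poly C}) : (forall i, K q`_i) ->
  exists p : {poly subfield_of K}, map_poly val p = q.
Proof.
move=> Kq; exists (\poly_(i < size q) insubd 0 q`_i).
apply/polyP => i; rewrite coef_map coef_poly.
have [lt_i_q | ge_i_q] := ltnP i (size q); last by rewrite nth_default.
by rewrite /= insubdK //; apply/memK.
Qed.
End SubfieldTheory.

Lemma compositum_subfield (L E : C -> Prop) : is_subfield (compositum L E).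
Proof.
split=> [F HF _ _|F HF _ _|x y Lx Ly F HF LF EF|x y Lx Ly F HF LF EF|
         x Lx F HF LF EF].
- exact: subfield0.
- exact: subfield1.
- by apply: subfieldB => //; [apply: Lx | apply: Ly].
- by apply: subfieldM => //; [apply: Lx | apply: Ly].
- by apply: subfieldV => //; apply: Lx.
Qed.

Lemma compositum_subl (L E : C -> Prop) : subf L (compositum L E).
Proof. by move=> x Lx F _ LF _; apply: LF. Qed.

Lemma compositum_subr (L E : C -> Prop) : subf E (compositum L E).
Proof. by move=> x Ex F _ _ EF; apply: EF. Qed.

Lemma algebraic_overP (K : C -> Prop) x : is_subfield K ->
  algebraic_over K x <-> algebraicOver (val : subfield_of K -> C) x.
Proof.
move=> HK; split=> [[p [p_neq0 Kp px0]] | [p p_neq0 px0]].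
  have [q pE] := poly_subfield_lift HK Kp.
  by exists q; rewrite ?pE // -(map_poly_eq0 val) pE.
exists (map_poly val p); split=> // [|i]; first by rewrite map_poly_eq0.
by rewrite coef_map; apply: subfield_valK.
Qed.

Lemma algebraic_overSield (K : C -> Prop) :
  is_subfield K -> is_subfield (algebraic_over K).
Proof.
move=> HK; have algP x := algebraic_overP x HK.
split=> [||x y /algP Kx /algP Ky|x y /algP Kx /algP Ky|x /algP Kx]; apply/algP.
- exact: algebraic0.
- exact: algebraic1.
- exact: algebraic_sub.
- exact: algebraic_mul.
- exact: algebraic_inv.
Qed.

Lemma subf_algebraic_over (K : C -> Prop) :
  is_subfield K -> subf K (algebraic_over K).
Proof.
move=> HK x /(subfield_val_onto HK) [a <-].
by apply/algebraic_overP => //; apply: algebraic_id.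
Qed.

Lemma algebraic_overS (K K' : C -> Prop) x :
  subf K K' -> algebraic_over K x -> algebraic_over K' x.
Proof. by move=> KK' [p [p_neq0 Kp px0]]; exists p; split=> // i; apply: KK'. Qed.

Lemma algebraic_ext_compositum (K L K' : C -> Prop) :
  algebraic_ext K L -> is_subfield K' -> subf K K' ->
  algebraic_ext K' (compositum L K').
Proof.
move=> [_ _ _ algL] HK' KK'; split=> //; first exact: compositum_subfield.
  exact: compositum_subr.
move=> x LK'x; apply: LK'x; first exact: algebraic_overSield.
  by move=> y /algL; apply: algebraic_overS.
exact: subf_algebraic_over.
Qed.

Lemma sum_coord_pair (c : nat -> C) a b :
  \sum_(i < size [:: a; b]) c i * [:: a; b]`_i = c 0%N * a + c 1%N * b.
Proof. by rewrite /= !big_ord_recl big_ord0 /= addr0. Qed.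

Lemma lin_indep_1x (K : C -> Prop) x :
  is_subfield K -> ~ K x -> lin_indep K [:: 1; x].
Proof.
move=> HK notKx c Kc; rewrite sum_coord_pair mulr1 => c_rel.
have c1_0 : c 1%N = 0.
  apply: contrapT => /eqP c1_neq0; apply: notKx.
  have -> : x = - c 0%N / c 1%N.
    apply: (mulfI c1_neq0); rewrite mulrCA divff // mulr1.
    by apply/eqP; rewrite -addr_eq0 addrC c_rel.
  by apply: subfieldM => //; [apply: subfieldN | apply: subfieldV].
rewrite c1_0 mul0r addr0 in c_rel.
by case=> [|[|]].
Qed.

Lemma lin_disjoint_cap (K K' L : C -> Prop) x :
  is_subfield K -> is_subfield K' -> is_subfield L ->
  lin_disjoint K K' L -> K' x -> L x -> K x.
Proof.
move=> HK HK' HL KK'L K'x Lx; apply: contrapT => notKx.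
have K'_1x : forall i, (i < 2)%N -> K' [:: 1; x]`_i.
  by case=> [|[|]] // _; apply: subfield1.
pose c i := if i == 0%N then x else -1.
have Lc i : L (c i).
  by rewrite /c; case: eqP => _ //; exact/(subfieldN HL)/(subfield1 HL).
have := KK'L [:: 1; x] K'_1x (lin_indep_1x HK notKx) c Lc.
rewrite sum_coord_pair /c /= mulr1 mulN1r subrr => /(_ erefl 1%N isT).
by move/eqP; rewrite oppr_eq0 oner_eq0.
Qed.

Definition in_span (K : C -> Prop) (s : seq C) (x : C) : Prop :=
  exists c : nat -> C, (forall i, K (c i)) /\ x = \sum_(i < size s) c i * s`_i.

Section Span.
Variables (K : C -> Prop) (HK : is_subfield K).

Lemma in_span_nil : in_span K [::] 0.
Proof. by exists (fun=> 0); split=> [_|]; [apply: subfield0 | rewrite big_ord0]. Qed.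

Lemma in_span_cat u v x y :
  in_span K u x -> in_span K v y -> in_span K (u ++ v) (x + y).
Proof.
move=> [cu [Kcu ->]] [cv [Kcv ->]].
exists (fun i => if (i < size u)%N then cu i else cv (i - size u)%N).
split=> [i|]; first by case: ifP.
rewrite size_cat big_split_ord /=; congr (_ + _); apply: eq_bigr => i _.
  by rewrite /= ltn_ord nth_cat ltn_ord.
by rewrite /= nth_cat ltnNge leq_addr /= addKn.
Qed.

Lemma in_span_scale t a y :
  in_span K t y -> in_span K [seq a * b | b <- t] (a * y).
Proof.
move=> [c [Kc ->]]; exists c; split=> //.
rewrite size_map mulr_sumr; apply: eq_bigr => i _.
by rewrite (nth_map 0) // mulrCA.
Qed.

Lemma in_span_allpairs t s (c : nat -> C) : (forall i, in_span K t (c i)) ->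
  in_span K [seq a * b | a <- s, b <- t] (\sum_(i < size s) c i * s`_i).
Proof.
elim: s c => [|a s IHs] c tc; first by rewrite big_ord0; apply: in_span_nil.
rewrite big_ord_recl allpairs_cons; apply: in_span_cat.
  by rewrite mulrC; apply: in_span_scale.
have := IHs (fun i => c i.+1) (fun i => tc i.+1).
by congr (in_span _ _ _); apply: eq_bigr => i _; rewrite lift0.
Qed.
End Span.

Lemma finite_ext_trans (K K' E : C -> Prop) :
  finite_ext K K' -> finite_ext K' E -> finite_ext K E.
Proof.
move=> [HK HK' KK' [t [K't spanK']]] [_ HE K'E [s [Es spanE]]].
split=> //; first by move=> x /KK' /K'E.
exists [seq a * b | a <- s, b <- t]; split.
  move=> i /(mem_nth 0) /allpairsP [[a b] [/= sa tb ->]].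
  have [[j lt_j <-] [k lt_k <-]] := (nthP 0 sa, nthP 0 tb).
  by apply: subfieldM => //; [apply: Es | apply/K'E/K't].
move=> x /spanE [c [K'c ->]].
by apply: (in_span_allpairs HK) => i; apply: spanK'.
Qed.

Lemma lin_indepP (K : C -> Prop) s : K 0 ->
  lin_indep K s <-> forall c : 'I_(size s) -> C, (forall i, K (c i)) ->
    \sum_i c i * s`_i = 0 -> forall i, c i = 0.
Proof.
move=> K0; split=> [indep c Kc c_rel i | indep c Kc c_rel i lt_i].
  pose c' n := oapp c 0 (insub n).
  have c'E (j : 'I_(size s)) : c' j = c j by rewrite /c' valK.
  rewrite -c'E; apply: indep => [n||]; rewrite ?ltn_ord //.
    by rewrite /c'; case: insub.
  by under eq_bigr do rewrite c'E.
exact: (indep (fun i => c i) (fun=> Kc _) c_rel (Ordinal lt_i)).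
Qed.

Lemma min_poly_indep_powers (K : C -> Prop) x : K 0 -> algebraic_over K x ->
  exists m : {poly C}, [/\ m != 0, (forall i, K m`_i), root m x &
    lin_indep K (mkseq (GRing.exp x) (size m).-1)].
Proof.
move=> K0 algx.
pose P n := `[< exists p : {poly C},
  [/\ p != 0, (forall i, K p`_i), root p x & size p = n] >].
have exP : exists n, P n.
  by case: algx => p [p_neq0 Kp px0]; exists (size p); apply/asboolP; exists p.
case: (ex_minnP exP) => _ /asboolP [m [m_neq0 Km mx0 <-]] min_m.
exists m; split=> // c Kc; rewrite size_mkseq => c_rel i lt_i.
pose q := \poly_(i < (size m).-1) c i.
have q_eq0 : q = 0.
  apply: contrapT => /eqP q_neq0.
  have le_m_q : (size m <= size q)%N.
    apply: min_m; apply/asboolP; exists q; split=> // [j|].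
      by rewrite coef_poly; case: ifP.
    apply/eqP; rewrite horner_poly -[RHS]c_rel.
    by apply: eq_bigr => j _; rewrite nth_mkseq.
  have := leq_trans le_m_q (size_poly _ _).
  by rewrite leqNgt ltn_predL size_poly_gt0 m_neq0.
by have := congr1 (coefp i) q_eq0; rewrite /= coef_poly lt_i coef0.
Qed.

Lemma lin_indep_span (K E : C -> Prop) (t s : seq C) :
  is_subfield K -> is_subfield E -> subf K E ->
  lin_indep E t -> (forall j, (j < size s)%N -> in_span K t s`_j) ->
  lin_indep K s -> lin_indep E s.
Proof.
move=> HK HE KE /(lin_indepP _ (subfield0 HE)) Et span_s.
move=> /(lin_indepP _ (subfield0 HK)) Ks; apply/(lin_indepP _ (subfield0 HE)).
have /fin_all_exists[a coord_s] : forall j : 'I_(size s), exists a : nat -> C,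
    (forall i, K (a i)) /\ s`_j = \sum_(i < size t) a i * t`_i.
  by move=> j; apply: span_s.
pose B : 'M[subfield_of K]_(size s, size t) := \matrix_(j, i) insubd 0 (a j i).
have valB j i : val (B j i) = a j i.
  by rewrite mxE /= insubdK //; apply/subfield_predP => //; case: (coord_s j).
clearbody B.
have expand (w : 'I_(size s) -> C) : \sum_j w j * s`_j =
    \sum_(i < size t) (\sum_j w j * val (B j i)) * t`_i.
  under eq_bigr => j _ do rewrite (coord_s j).2 mulr_sumr.
  rewrite exchange_big /=; apply: eq_bigr => i _; rewrite mulr_suml.
  by apply: eq_bigr => j _; rewrite valB mulrA.
(* [B] holds the K-coordinates of [s] in [t]; its rows are free over K, hence
   over C, while an E-relation on [s] is an E-relation on [t] times [B]. *)
have freeB : row_free B.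
  apply: inj_row_free => v vB0; apply/rowP => j; rewrite mxE.
  apply/eqP; rewrite -(fmorph_eq0 val); apply/eqP.
  apply: (Ks (fun j => val (v 0 j)) _ _ j) => [j'|]; first exact: subfield_valK.
  rewrite expand; apply: big1 => i _.
  have -> : \sum_j val (v 0 j) * val (B j i) = val ((v *m B) 0 i).
    by rewrite mxE rmorph_sum; apply: eq_bigr => j' _; rewrite rmorphM.
  by rewrite vB0 mxE rmorph0 mul0r.
move=> c Ec c_rel j.
have cB0 : \row_j c j *m map_mx val B = 0 *m map_mx val B.
  rewrite mul0mx; apply/rowP => i; rewrite !mxE; under eq_bigr do rewrite !mxE.
  apply: (Et (fun i => \sum_j c j * val (B j i)) _ _ i) => [i'|].
    apply: (subfield_sum HE) => j' _.
    by apply: (subfieldM HE); [apply: Ec | apply/KE/(subfield_valK HK)].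
  by rewrite -expand.
have /rowP/(_ j) := row_free_inj (etrans (row_free_map _ _) freeB) cB0.
by rewrite !mxE.
Qed.

Definition adjoin (K : C -> Prop) (x : C) : C -> Prop :=
  fun y => exists p : {poly subfield_of K}, y = (map_poly val p).[x].

Section Adjoin.
Variables (K : C -> Prop) (HK : is_subfield K) (x : C).

Lemma adjoin_comp y (q : {poly subfield_of K}) :
  adjoin K x y -> adjoin K x (map_poly val q).[y].
Proof. by case=> p ->; exists (q \Po p); rewrite map_comp_poly horner_comp. Qed.

Lemma adjoin_val (a : subfield_of K) : adjoin K x (val a).
Proof. by exists a%:P; rewrite map_polyC hornerC. Qed.

Lemma adjoin0 : adjoin K x 0.
Proof. by exists 0; rewrite rmorph0 horner0. Qed.

Lemma adjoin1 : adjoin K x 1.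
Proof. by exists 1; rewrite rmorph1 hornerC. Qed.

Lemma adjoin_x : adjoin K x x.
Proof. by exists 'X; rewrite map_polyX hornerX. Qed.

Lemma adjoinB y z : adjoin K x y -> adjoin K x z -> adjoin K x (y - z).
Proof. by case=> p -> [q ->]; exists (p - q); rewrite rmorphB hornerD hornerN. Qed.

Lemma adjoinM y z : adjoin K x y -> adjoin K x z -> adjoin K x (y * z).
Proof. by case=> p -> [q ->]; exists (p * q); rewrite rmorphM hornerM. Qed.

Lemma adjoin_subl : subf K (adjoin K x).
Proof. by move=> y /(subfield_val_onto HK) [a <-]; apply: adjoin_val. Qed.

Lemma adjoin_min (G : C -> Prop) :
  is_subfield G -> subf K G -> G x -> subf (adjoin K x) G.
Proof.
move=> HG KG Gx y [p ->]; apply: subfield_horner => // i.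
by rewrite coef_map; apply/KG/(subfield_valK HK).
Qed.

Lemma adjoinV y : algebraic_over K x -> adjoin K x y -> adjoin K x y^-1.
Proof.
move=> algx Kxy; have [->|y_neq0] := eqVneq y 0.
  by rewrite invr0; apply: adjoin0.
have /(algebraic_overP _ HK) [p p_neq0 py0] : algebraic_over K y.
  apply: (adjoin_min (algebraic_overSield HK)) Kxy => //.
  exact: subf_algebraic_over.
(* Dividing out the powers of X gives an annihilating polynomial r of y with
   r(0) <> 0, and then r(y) = 0 expresses y^-1 as a polynomial in y. *)
have [n [r /implyP/(_ p_neq0) r0_neq0 pE]] := multiplicity_XsubC p 0.
rewrite rootE horner_coef0 -(fmorph_eq0 val) in r0_neq0.
pose q := drop_poly 1 r.
have rE : r = q * 'X + (r`_0)%:P.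
  apply/polyP => -[|i]; rewrite coefD coefMX coefC ?coef_drop_poly ?addn1 /=.
    by rewrite add0r.
  by rewrite addr0.
have ry0 : (map_poly val r).[y] = 0.
  move: py0; rewrite /root pE polyC0 subr0 rmorphM rmorphXn /= (map_polyX val).
  rewrite hornerM hornerXn mulf_eq0 expf_eq0 (negPf y_neq0) andbF orbF.
  by move/eqP.
move: ry0; rewrite {1}rE rmorphD rmorphM /= (map_polyX val) (map_polyC val).
rewrite hornerMXaddC => ry0.
rewrite (_ : y^-1 = (map_poly val q).[y] * val (- (r`_0)^-1)).
  by apply: adjoinM; [apply: adjoin_comp | apply: adjoin_val].
have -> : y^-1 = - (map_poly val q).[y] / val r`_0.
  apply: (mulfI y_neq0); rewrite divff // mulrA mulrN [y * _]mulrC.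
  have -> : (map_poly val q).[y] * y = - val r`_0.
    by apply/eqP; rewrite -addr_eq0 ry0.
  by rewrite opprK divff.
by rewrite mulNr -mulrN rmorphN fmorphV.
Qed.

Lemma adjoin_subfield : algebraic_over K x -> is_subfield (adjoin K x).
Proof.
move=> algx; split; [exact: adjoin0 | exact: adjoin1 | exact: adjoinB |
  exact: adjoinM | by move=> y; apply: adjoinV].
Qed.

Lemma adjoin_in_span (m : {poly C}) y :
  m != 0 -> (forall i, K m`_i) -> root m x ->
  adjoin K x y -> in_span K (mkseq (GRing.exp x) (size m).-1) y.
Proof.
move=> m_neq0 Km mx0 [p ->]; have [mK mE] := poly_subfield_lift HK Km.
have mK_neq0 : mK != 0 by rewrite -(map_poly_eq0 val) mE.
exists (fun i => val (p %% mK)`_i); split=> [i|]; first exact: subfield_valK.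
rewrite {1}(divp_eq p mK) rmorphD rmorphM /= hornerD hornerM mE (rootP mx0).
rewrite mulr0 add0r.
rewrite size_mkseq (@horner_coef_wide _ (size m).-1).
  by apply: eq_bigr => i _; rewrite (coef_map val) nth_mkseq.
rewrite (size_map_poly val) -mE (size_map_poly val).
by case: (size mK) (ltn_modpN0 p mK_neq0).
Qed.
End Adjoin.
End Subfields.

Unset Implicit Arguments.

Theorem lemma2p2 (C : closedFieldType) (char0 : [pchar C] =i pred0)
  (K L K' : C -> Prop) :
  vast K L -> finite_ext K K' -> lin_disjoint K K' L ->
  vast K' (compositum L K').
Proof.
move=> [algL [x0 [Lx0 notKx0]] vastL] finK' disjK'L.
have [HK HK' KK' _] := finK'; have [_ HL _ algKL] := algL.
have notK'_of_L y : L y -> ~ K y -> ~ K' y.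
  move=> Ly notKy K'y.
  exact/notKy/(lin_disjoint_cap HK HK' HL disjK'L K'y Ly).
split; first exact: algebraic_ext_compositum algL HK' KK'.
  by exists x0; split; [apply: compositum_subl | apply: notK'_of_L].
move=> E finE; have [_ HE K'E _] := finE.
have [M [HM _ ML [x [Mx notKx]] disjKME]] :=
  vastL E (finite_ext_trans finK' finE).
have algx : algebraic_over K x := algKL x (ML x Mx).
have [m [m_neq0 Km mx0 indep_pow]] := min_poly_indep_powers (subfield0 HK) algx.
exists (adjoin K' x); split.
- exact/adjoin_subfield/(algebraic_overS KK').
- exact: adjoin_subl.
- apply: adjoin_min => //; first exact: compositum_subfield.
    exact: compositum_subr.
  exact: compositum_subl (ML x Mx).
- by exists x; split; [apply: adjoin_x | apply: notK'_of_L (ML x Mx) notKx].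
move=> s K'xs indep_s; apply: (lin_indep_span HK' HE K'E _ _ indep_s).
  apply: disjKME indep_pow => i; rewrite size_mkseq => lt_i.
  by rewrite nth_mkseq //; apply: (subfieldX HM).
by move=> j /K'xs; apply: adjoin_in_span (fun i => KK' _ (Km i)) mx0.
Qed.
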